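(* Let $X$ be a paracompact topological space, let $Y$ be a Banach space, and let $f:X\to Y$ be a function. Then $f$ is Baire-1 if and only if there is a sequence $(G_n)_{n=1}^{\infty}$ of open strips in $X\times Y$ such that $\bigcap_{n=1}^{\infty}G_n=gr(f)$ and $diam(G_n(x))\to 0$ as $n\to\infty$ for each $x\in X$.
   Context: $gr(f)=\{(x,f(x)):x\in X\}\subseteq X\times Y$ is the graph of $f$. For $G\subseteq X\times Y$ and $x\in X$, the vertical section is $G(x)=\{y\in Y:(x,y)\in G\}$ (identified with $G\cap(\{x\}\times Y)$). An open strip is an open set $G\subseteq X\times Y$ such that $G(x)$ is convex for every $x\in X$. The diameter is taken with respect to the norm of $Y$. A function is Baire-0 if it is continuous, and for a countable ordinal $\alpha\ge 1$ it is Baire-$\alpha$ if it is the pointwise limit of a sequence of functions $f_n$, each Baire-$\alpha_n$ for some $\alpha_n<\alpha$; in particular, Baire-1 functions are pointwise limits of sequences of continuous functions. *)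

From HB Require Import structures.
From mathcomp Require Import all_boot all_order all_algebra.
From mathcomp Require Import all_classical all_reals all_analysis.
Set Implicit Arguments. Unset Strict Implicit. Unset Printing Implicit Defensive.
Import Order.TTheory GRing.Theory Num.Theory.
Import numFieldNormedType.Exports.
Local Open Scope classical_set_scope.
Local Open Scope ring_scope.

Definition locally_finite_family (X : topologicalType) (J : Type)
  (V : J -> set X) : Prop :=
  forall x : X, exists N : set X, nbhs x N /\
    finite_set [set j | V j `&` N !=set0].

(* Paracompact (Engelking's convention: Hausdorff, and every open cover has
   a locally finite open refinement). *)
Definition paracompact (X : topologicalType) : Prop :=
  hausdorff_space X /\
  forall (I : Type) (U : I -> set X),
    (forall i, open (U i)) -> \bigcup_i U i = setT ->
    exists (J : Type) (V : J -> set X),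
      [/\ (forall j, open (V j)), \bigcup_j V j = setT,
          (forall j, exists i, V j `<=` U i) &
          locally_finite_family V].

Definition graph (X Y : Type) (f : X -> Y) : set (X * Y) :=
  [set p | p.2 = f p.1].

Definition vsection (X Y : Type) (G : set (X * Y)) (x : X) : set Y :=
  [set y | G (x, y)].

Definition open_strip (R : realType) (X : topologicalType)
  (Y : normedModType R) (G : set (X * Y)) : Prop :=
  open G /\ forall x : X, convex_set (vsection G x : set (convex_lmodType Y)).

Definition diam (R : realType) (Y : normedModType R) (A : set Y) : \bar R :=
  ereal_sup [set ((`|y - z|)%:E) | y in A & z in A].

Definition baire1 (R : realType) (X : topologicalType)
  (Y : normedModType R) (f : X -> Y) : Prop :=
  exists g : nat -> X -> Y, (forall n, continuous (g n)) /\
    forall x, (fun n => g n x) @ \oo --> f x.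

(* If continuous g_n converge pointwise to f, let G_n be the set whose section
   at x is the open ball about g_n(x) of radius sup_(k >= n) |g_k(x) - g_n(x)|
   plus 1/(n+1): these are open strips containing the graph of f, and their
   sections shrink to f(x) because g_k(x) -> f(x).
   Conversely, an open strip G containing the graph of f admits a continuous
   selection: refine the cover of X by the open sets {x | (x, f a) in G} to a
   locally finite one and take Urysohn functions subordinate to it (X is
   paracompact, hence normal); their normalised sum glues the constants f(a)
   into a continuous g with g(x) a convex combination of points of the convex
   section G(x).  Selections g_n from G_n converge to f since
   |g_n(x) - f(x)| <= diam G_n(x). *)

From HB Require Import structures.
From mathcomp Require Import all_boot all_order all_algebra.
From mathcomp Require Import all_classical all_reals all_analysis finmap.
From mathcomp Require Import ring lra.
Import Order.TTheory GRing.Theory Num.Theory.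
Import numFieldNormedType.Exports.
Local Open Scope classical_set_scope.
Local Open Scope ring_scope.

Lemma closure_bigcup_locally_finite {X : topologicalType} {I : Type}
    {W : I -> set X} (P : set I) :
  locally_finite_family W ->
  closure (\bigcup_(i in P) W i) `<=` \bigcup_(i in P) closure (W i).
Proof.
move=> lfW x clx; apply: contrapT => nx.
have [N [Nx finN]] := lfW x.
have avoid (i : {classic I}) : exists B, P i -> nbhs x B /\ W i `&` B = set0.
  have [Pi|] := pselect (P i); last by exists setT.
  have /existsNP[B /not_implyP[xB nWB]] : ~ closure (W i) x.
    by move=> ?; apply: nx; exists i.
  exists B => _; split => //; apply/seteqP; split => // y Wy.
  by apply: nWB; exists y.
have [B hB] := choice avoid.
pose S := [set i : {classic I} | W i `&` N !=set0] `&` P.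
have finS : finite_set S by apply: finite_setIl.
have nbhsB i : i \in fset_set S -> nbhs x (B i).
  by rewrite in_fset_set // => /set_mem[_ Pi]; exact: (hB i Pi).1.
have NB := @filterI _ _ (nbhs_filter x) _ _ Nx
  (filter_bigI (nbhs_filter x) nbhsB).
have [y [[i Pi Wiy] [Ny By]]] := clx _ NB.
have Si : S i by split => //; exists y.
have : (W i `&` B i) y.
  by split => //; apply: By; rewrite /= in_fset_set //; exact/mem_set.
by rewrite (hB i Pi).2.
Qed.

Section paracompact_space.
Context {X : topologicalType} (pX : paracompact X).

Lemma paracompact_separation (C A : set X) : closed C ->
  (forall c, C c -> exists U, [/\ open U, U c & closure U `&` A = set0]) ->
  exists W, [/\ open W, C `<=` W & closure W `&` A = set0].
Proof.
move=> clC sepC.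
have /choice[u hu] (c : X) :
    exists U, [/\ open U, closure U `&` A = set0 & C c -> U c].
  have [Cc|nCc] := pselect (C c); last first.
    by exists set0; rewrite closure0 set0I; split => //; exact: open0.
  by have [U [? ? ?]] := sepC c Cc; exists U.
pose U (i : option X) := if i is Some c then u c else ~` C.
have oU i : open (U i).
  by case: i => [c|] /=; [case: (hu c) | exact: closed_openC].
have covU : \bigcup_i U i = setT.
  apply/seteqP; split => // y _.
  have [Cy|] := pselect (C y); last by exists None.
  by exists (Some y) => //=; case: (hu y) => _ _; apply.
have [J [V [oV covV refV lfV]]] := pX.2 _ U oU covU.
pose P := [set j | V j `&` C !=set0].
exists (\bigcup_(j in P) V j); split.
- by apply: bigcup_open => j _; exact: oV.
- move=> c Cc; have : setT c by [].
  by rewrite -covV => -[j _ Vjc]; exists j => //; exists c.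
- apply/seteqP; split => // y [/(closure_bigcup_locally_finite P lfV)].
  move=> [j [z [Vjz Cz]] clVjy] Ay.
  have [[c|] VU] := refV j; last by have := VU z Vjz.
  have [_ <- _] := hu c; split => //; exact: closureS clVjy.
Qed.

Lemma paracompact_regular (x : X) (C : set X) : closed C -> ~ C x ->
  exists O, [/\ open O, O x & closure O `&` C = set0].
Proof.
move=> clC nCx.
have [W [oW CW clWx]] : exists W,
    [/\ open W, C `<=` W & closure W `&` [set x] = set0].
  apply: paracompact_separation => // c Cc.
  have xc : x != c by apply: contra_notN nCx => /eqP ->.
  move: pX.1; rewrite open_hausdorff => /(_ x c xc).
  move=> [[A B] [/= /set_mem xA /set_mem cB] [/= oA oB /eqP AB0]].
  exists B; split => //; apply/seteqP; split => // y [clB /= yx].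
  rewrite yx in clB; have [z [Bz Az]] := clB A (open_nbhs_nbhs (conj oA xA)).
  by have : (A `&` B) z by []; rewrite AB0.
exists (~` closure W); split.
- exact/closed_openC/closed_closure.
- by move=> clWx'; rewrite -[False]/(set0 x) -clWx.
- apply/seteqP; split => // y [cly Cy].
  have : closure (~` W) y.
    by apply: closureS cly => w nw Ww; apply: nw; exact: subset_closure.
  by rewrite -(closure_id _).1; [apply; exact: CW | exact: open_closedC].
Qed.

Lemma paracompact_normal : normal_space X.
Proof.
move=> A clA B /set_nbhsP [U [oU AU UB]].
have [W [oW AW clWU]] : exists W,
    [/\ open W, A `<=` W & closure W `&` ~` U = set0].
  apply: paracompact_separation => // a Aa.
  by apply: paracompact_regular; [exact: open_closedC | move/(_ (AU a Aa))].
exists W; first by apply/set_nbhsP; exists W; split.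
move=> y clWy; apply: UB; apply: contrapT => nUy.
by rewrite -[False]/(set0 y) -clWU.
Qed.

Lemma paracompact_closed_shrinking {J : Type} {V : J -> set X} :
  (forall j, open (V j)) -> \bigcup_j V j = setT ->
  exists F : J -> set X,
    [/\ forall j, closed (F j), forall j, F j `<=` V j & \bigcup_j F j = setT].
Proof.
move=> oV covV.
have /choice[jx Vjx] (x : X) : exists j, V j x.
  by have : setT x by []; rewrite -covV => -[j _ ?]; exists j.
have /choice[U hU] (x : X) :
    exists U, [/\ open U, U x & closure U `&` ~` V (jx x) = set0].
  apply: paracompact_regular; first exact: open_closedC.
  by move/(_ (Vjx x)).
have oU x : open (U x) by case: (hU x).
have covU : \bigcup_x U x = setT.
  by apply/seteqP; split => // x _; exists x => //; case: (hU x).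
have [K [W [oW covW refW lfW]]] := pX.2 _ U oU covU.
have [xk WU] := choice refW.
exists (fun j => closure (\bigcup_(k in [set k | jx (xk k) = j]) W k)); split.
- by move=> j; exact: closed_closure.
- move=> j y /(closure_bigcup_locally_finite _ lfW) [k /= <- clWky].
  apply: contrapT => nVy; rewrite -[False]/(set0 y); have [_ _ <-] := hU (xk k).
  by split => //; apply: closureS clWky; exact: WU.
- apply/seteqP; split => // y _; have : setT y by [].
  rewrite -covW => -[k _ Wky].
  by exists (jx (xk k)) => //; apply: subset_closure; exists k.
Qed.

Lemma paracompact_bump_functions (R : realType) {J : Type} {V : J -> set X} :
  (forall j, open (V j)) -> \bigcup_j V j = setT ->
  exists phi : J -> X -> R,
    [/\ forall j, continuous (phi j), forall j x, 0 <= phi j x,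
        forall j x, phi j x != 0 -> V j x & forall x, exists j, phi j x = 1].
Proof.
move=> oV covV.
have [F [clF FV covF]] := paracompact_closed_shrinking oV covV.
have sepF j : uniform_separator (~` V j) (F j).
  apply: (iffLR (@normal_separatorP R X) paracompact_normal).
  - exact: open_closedC.
  - exact: clF.
  - by apply/seteqP; split => // y [nVy /FV].
exists (fun j => Urysohn (~` V j) (F j)); split.
- by move=> j; exact: Urysohn_continuous.
- move=> j x; have : (Urysohn (~` V j) (F j) x : R) \in `[0, 1].
    by apply: Urysohn_range; exists x.
  by rewrite in_itv /= => /andP[].
- move=> j x /eqP phix0; apply: contrapT => nVx; apply: phix0.
  exact: (Urysohn_sub0 (sepF j) (ex_intro2 _ _ x nVx erefl)).
- move=> x; have : setT x by [].
  rewrite -covF => -[j _ Fjx]; exists j.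
  exact: (Urysohn_sub1 (sepF j) (ex_intro2 _ _ x Fjx erefl)).
Qed.

End paracompact_space.

Lemma convex_setP {R : numDomainType} {Z : lmodType R} (C : set Z) :
  convex_set (C : set (convex_lmodType Z)) <->
  (forall a b t, C a -> C b -> 0 <= t <= 1 -> C (t *: a + (1 - t) *: b)).
Proof.
split=> [hC a b t Ca Cb /andP[t0 t1] | hC a b l /set_mem Ca /set_mem Cb].
  exact: set_mem (hC a b (Itv01 t0 t1) (mem_set Ca) (mem_set Cb)).
by apply: mem_set; apply: hC Ca Cb _; rewrite ge0 le1.
Qed.

Lemma convex_ball {R : realFieldType} {Y : normedModType R} (c : Y) (e : R) :
  convex_set (ball c e : set (convex_lmodType Y)).
Proof.
apply/convex_setP => a b t; rewrite -!ball_normE /= => ca cb /andP[t0 t1].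
have -> : c - (t *: a + (1 - t) *: b) = t *: (c - a) + (1 - t) *: (c - b).
  by rewrite !scalerBr addrACA -scalerDl subrKC scale1r opprD.
rewrite (le_lt_trans (ler_normD _ _)) // !normrZ ger0_norm //.
rewrite ger0_norm ?subr_ge0 //.
have [->|t_gt0] := eqVneq t 0; first by rewrite mul0r add0r subr0 mul1r.
have : t * `|c - a| < t * e by rewrite ltr_pM2l // lt_def t_gt0 t0.
have : (1 - t) * `|c - b| <= (1 - t) * e by rewrite ler_wpM2l ?subr_ge0 // ltW.
lra.
Qed.

Lemma convex_bigcup_ball {R : realFieldType} {Y : normedModType R} (c : Y)
    {I : Type} (P : set I) (r : I -> R) :
  convex_set (\bigcup_(i in P) ball c (r i) : set (convex_lmodType Y)).
Proof.
apply/convex_setP => a b t [i Pi ai] [j Pj bj] t01.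
have [rij|rji] := leP (r i) (r j).
  exists j => //; move/convex_setP: (convex_ball c (r j)); apply => //.
  by have := le_ball rij ai.
exists i => //; move/convex_setP: (convex_ball c (r i)); apply => //.
by have := le_ball (ltW rji) bj.
Qed.

Lemma convex_barycenter {R : numFieldType} {Z : lmodType R} (C : set Z)
    {I : eqType} (r : seq I) (w : I -> R) (y : I -> Z) :
  convex_set (C : set (convex_lmodType Z)) -> (forall i, 0 <= w i) ->
  (forall i, w i != 0 -> C (y i)) -> 0 < \sum_(i <- r) w i ->
  C ((\sum_(i <- r) w i)^-1 *: \sum_(i <- r) w i *: y i).
Proof.
move=> /convex_setP hC w_ge0 wC.
elim: r => [|a r IH]; first by rewrite big_nil ltxx.
rewrite !big_cons; have [->|wa_neq0] := eqVneq (w a) 0.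
  by rewrite scale0r !add0r.
have [sr0 _|sr_neq0 _] := eqVneq (\sum_(i <- r) w i) 0.
  have -> : \sum_(i <- r) w i *: y i = 0.
    move/eqP: sr0; rewrite psumr_eq0 // => /allP wr0.
    by rewrite big1_seq // => i /wr0 /eqP ->; rewrite scale0r.
  by rewrite sr0 !addr0 scalerA mulVf // scale1r; exact: wC.
set s := \sum_(i <- r) w i; set v := \sum_(i <- r) w i *: y i.
have s_gt0 : 0 < s by rewrite lt_def sr_neq0 sumr_ge0.
have wa_gt0 : 0 < w a by rewrite lt_def wa_neq0 w_ge0.
have was_neq0 : w a + s != 0 by rewrite gt_eqF // addr_gt0.
have -> : (w a + s)^-1 *: (w a *: y a + v) =
    (w a / (w a + s)) *: y a + (1 - w a / (w a + s)) *: (s^-1 *: v).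
  rewrite scalerDr !scalerA; congr (_ + _); first by rewrite mulrC.
  by congr (_ *: _); field; rewrite was_neq0 sr_neq0.
apply: hC (wC a wa_neq0) (IH s_gt0) _.
rewrite divr_ge0 ?addr_ge0 ?(ltW wa_gt0) ?(ltW s_gt0) //=.
by rewrite ler_pdivrMr ?addr_gt0 // mul1r lerDl (ltW s_gt0).
Qed.

Lemma fsbig_setT_finite_support {Z : nmodType} {J : choiceType} (P : set J)
    (F : J -> Z) :
  finite_set P -> (forall j, F j != 0 -> P j) ->
  \sum_(j \in [set: J]) F j = \sum_(j <- fset_set P) F j.
Proof.
move=> finP suppF; rewrite -(fsbig_widen P) ?fsbig_finite // => j [_ nPj] /=.
by apply: contra_notP nPj => /eqP; exact: suppF.
Qed.

Lemma convex_fsbig_barycenter {R : numFieldType} {Z : lmodType R} (C : set Z)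
    {J : choiceType} (P : set J) (w : J -> R) (y : J -> Z) :
  convex_set (C : set (convex_lmodType Z)) -> finite_set P ->
  (forall j, 0 <= w j) -> (forall j, w j != 0 -> P j /\ C (y j)) ->
  (exists j, w j != 0) ->
  0 < \sum_(j \in [set: J]) w j /\
  C ((\sum_(j \in [set: J]) w j)^-1 *: \sum_(j \in [set: J]) w j *: y j).
Proof.
move=> hC finP w_ge0 wPC [j0 wj0_neq0].
have wP j : w j != 0 -> P j by move=> /wPC[].
rewrite !(fsbig_setT_finite_support P) // => [|j]; last first.
  by rewrite scaler_eq0 negb_or => /andP[/wP].
have s_gt0 : 0 < \sum_(j <- fset_set P) w j.
  have j0P : j0 \in fset_set P by rewrite in_fset_set //; exact/mem_set/wP.
  rewrite (bigD1_seq j0) ?fset_uniq //=; apply: ltr_wpDr; first exact: sumr_ge0.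
  by rewrite lt_def wj0_neq0 w_ge0.
by split => //; apply: convex_barycenter => // j /wPC[].
Qed.

Lemma locally_finite_sum_continuous {R : numFieldType} {X : topologicalType}
    {Z : normedModType R} {J : Type} (V : J -> set X) (h : J -> X -> Z) :
  locally_finite_family V -> (forall j, continuous (h j)) ->
  (forall j x, h j x != 0 -> V j x) ->
  continuous (fun x => \sum_(j \in [set: {classic J}]) h j x).
Proof.
move=> lfV ch supph x; have [N [Nx finS]] := lfV x.
pose S := [set j : {classic J} | V j `&` N !=set0].
have sumN y : N y ->
    \sum_(j \in [set: {classic J}]) h j y = \sum_(j <- fset_set S) h j y.
  move=> Ny; apply: fsbig_setT_finite_support => // j /supph Vjy.
  by exists y.
rewrite /continuous_at (sumN x (nbhs_singleton Nx)).
apply: cvg_trans; last first.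
  by apply: continuous_big => [|j _]; [exact: add_continuous | exact: ch].
by apply: near_eq_cvg; near=> y; apply/esym/sumN; near: y.
Unshelve. all: by end_near.
Qed.

Lemma open_strip_continuous_selection {R : realType} {X : topologicalType}
    {Y : normedModType R} (H : set (X * Y)) (f : X -> Y) :
  paracompact X -> open_strip H -> graph f `<=` H ->
  exists g : X -> Y, continuous g /\ forall x, H (x, g x).
Proof.
move=> pX [oH cH] fH.
pose U a := [set x | H (x, f a)].
have oU a : open (U a).
  apply: (@open_comp _ _ (fun x => (x, f a))) => // x _.
  by apply: cvg_pair => //; exact: cvg_cst.
have covU : \bigcup_a U a = setT.
  by apply/seteqP; split => // x _; exists x => //; exact: fH.
have [J [V [oV covV refV lfV]]] := pX.2 _ U oU covU.
have [a VU] := choice refV.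
have [phi [cphi phi_ge0 phiV phi1]] := paracompact_bump_functions pX R oV covV.
pose s x := \sum_(j \in [set: {classic J}]) phi j x.
pose v x := \sum_(j \in [set: {classic J}]) phi j x *: f (a j).
have cs : continuous s := locally_finite_sum_continuous V _ lfV cphi phiV.
have cv : continuous v.
  apply: locally_finite_sum_continuous lfV _ _ => [j x|j x].
    by apply: continuousZr_tmp; exact: cphi.
  by rewrite scaler_eq0 negb_or => /andP[/phiV].
have average x : 0 < s x /\ H (x, (s x)^-1 *: v x).
  have [N [Nx finN]] := lfV x.
  pose P := [set j : {classic J} | V j x].
  apply: (convex_fsbig_barycenter (vsection H x) P) => //.
  - apply: sub_finite_set finN => j Vjx.
    by exists x; split => //; exact: nbhs_singleton.
  - by move=> j /phiV Vjx; split => //; exact: VU.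
  - by have [j phij1] := phi1 x; exists j; rewrite phij1 oner_neq0.
exists (fun x => (s x)^-1 *: v x); split => [x|x]; last exact: (average x).2.
have sx_neq0 : s x != 0 by rewrite gt_eqF // (average x).1.
exact: continuousZ (continuousV sx_neq0 (cs x)) (cv x).
Qed.

Section diameter.
Context {R : realType} {Y : normedModType R}.

Lemma le_diam {A : set Y} {a b : Y} : A a -> A b -> ((`|a - b|)%:E <= diam A)%E.
Proof. by move=> Aa Ab; apply: ereal_sup_ubound; exists a => //; exists b. Qed.

Lemma diam_sub_ball {A : set Y} {a : Y} {e : R} :
  A `<=` ball a e -> (diam A <= (e *+ 2)%:E)%E.
Proof.
move=> Aa; apply: ge_ereal_sup => _ [b /Aa + [c /Aa + <-]].
rewrite -!ball_normE /= lee_fin mulr2n => ab ac.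
by rewrite (le_trans (ler_distD a b c)) // distrC ltW // ltrD.
Qed.

Lemma cvg_diam0 {A : nat -> set Y} {a : Y} {u : nat -> Y} :
  (forall n, A n a) -> (forall n, A n (u n)) ->
  diam (A n) @[n --> \oo] --> 0%E -> u n @[n --> \oo] --> a.
Proof.
move=> Aa Au /fine_cvgP[finA /cvgrPdist_lt dA].
apply/cvgrPdist_lt => e e_gt0; near=> n.
have fin : diam (A n) \is a fin_num by near: n.
have : `|0 - fine (diam (A n))| < e by near: n; exact: dA.
rewrite sub0r normrN; apply: le_lt_trans; apply: le_trans (ler_norm _).
by rewrite -lee_fin fineK //; exact: le_diam.
Unshelve. all: by end_near.
Qed.

Lemma diam_cvg0 {A : nat -> set Y} {a : Y} :
  (forall n, A n a) ->
  (forall e, 0 < e -> \forall n \near \oo, A n `<=` ball a e) ->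
  diam (A n) @[n --> \oo] --> 0%E.
Proof.
move=> Aa shrinkA.
have diam_near (e : R) :
    0 < e -> \forall n \near \oo, (0 <= diam (A n) <= (e *+ 2)%:E)%E.
  move=> /shrinkA; apply: filterS => n An.
  rewrite (diam_sub_ball An) andbT.
  by rewrite (le_trans _ (le_diam (Aa n) (Aa n))) ?lee_fin.
have fin_near (e : R) : 0 < e -> \forall n \near \oo, diam (A n) \is a fin_num.
  move=> /(diam_near e); apply: filterS => n /andP[d_ge0 d_le].
  by rewrite ge0_fin_numE // (le_lt_trans d_le) // ltry.
apply/fine_cvgP; split; first exact: fin_near ltr01.
apply/cvgrPdist_le => e e_gt0; have e2_gt0 : 0 < e / 2 by rewrite divr_gt0.
near=> n.
have fin : diam (A n) \is a fin_num by near: n; exact: fin_near e2_gt0.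
have /andP[d_ge0 d_le] : (0 <= diam (A n) <= (e / 2 *+ 2)%:E)%E.
  by near: n; exact: diam_near.
rewrite sub0r normrN ger0_norm ?fine_ge0 // -lee_fin fineK //.
by rewrite (le_trans d_le) // mulr2n -splitr.
Unshelve. all: by end_near.
Qed.

Lemma bigcap_eq_graph {X : Type} {G : nat -> set (X * Y)} {f : X -> Y} :
  (forall n, graph f `<=` G n) ->
  (forall x, diam (vsection (G n) x) @[n --> \oo] --> 0%E) ->
  \bigcap_n G n = graph f.
Proof.
move=> fG dG; apply/seteqP; split => [[x y] Gxy | p fp n _]; last exact: fG.
have := cvg_diam0 (fun n => fG n (x, f x) erefl) (fun n => Gxy n I) (dG x).
move/(cvg_lim (@norm_hausdorff _ Y)).
by rewrite lim_cst //; exact: norm_hausdorff.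
Qed.

End diameter.

Lemma open_lt_continuous {R : realFieldType} {T : topologicalType}
    (u v : T -> R) :
  continuous u -> continuous v -> open [set t | u t < v t].
Proof.
move=> cu cv.
rewrite (_ : [set t | _] = (fun t => v t - u t) @^-1` [set r : R | 0 < r]).
  by apply: open_comp; [move=> t _; exact: cvgB (cv t) (cu t) | exact: open_gt].
by apply/seteqP; split => t /=; rewrite subr_gt0.
Qed.

Section baire_strip.
Context {R : realType} {X : topologicalType} {Y : normedModType R}.
Variable g : nat -> X -> Y.

Definition baire_strip (n : nat) : set (X * Y) :=
  [set p | (\bigcup_(k in [set k | (n <= k)%N])
              ball (g n p.1) (`|g k p.1 - g n p.1| + n.+1%:R^-1)) p.2].

Lemma open_strip_baire_strip n :
  (forall k, continuous (g k)) -> open_strip (baire_strip n).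
Proof.
move=> cg; split=> [|x]; last first.
  exact: (convex_bigcup_ball (g n x) _
    (fun k => `|g k x - g n x| + n.+1%:R^-1)).
have cg1 k : continuous (fun p : X * Y => g k p.1).
  by move=> p; apply: continuous_comp; [exact: cvg_fst | exact: cg].
have cdist (a b : X * Y -> Y) :
    continuous a -> continuous b -> continuous (fun p => `|a p - b p|).
  move=> ca cb p.
  exact: continuous_comp (cvgB (ca p) (cb p)) (@norm_continuous _ Y _).
rewrite (_ : baire_strip n = \bigcup_(k in [set k | (n <= k)%N])
    [set p | `|g n p.1 - p.2| < `|g k p.1 - g n p.1| + n.+1%:R^-1]).
  apply: bigcup_open => k _; apply: open_lt_continuous.
    by apply: cdist => // p; exact: cvg_snd.
  by move=> p; apply: cvgD; [exact: cdist | exact: cvg_cst].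
apply/seteqP; split => p [k nk pk]; exists k => //.
all: by move: pk; rewrite -ball_normE.
Qed.

Context {f : X -> Y} (gf : forall x, g n x @[n --> \oo] --> f x).

Lemma graph_sub_baire_strip n : graph f `<=` baire_strip n.
Proof.
move=> [x y]; rewrite /graph /= => ->.
have /filter_ex[k [nk fgk]] :
    \forall k \near \oo, (n <= k)%N /\ `|f x - g k x| < n.+1%:R^-1.
  near=> k; split; near: k; first exact: nbhs_infty_ge.
  by move/cvgrPdist_lt: (gf x); apply; rewrite invr_gt0.
exists k => //=; rewrite -ball_normE /=.
have := ler_distD (g k x) (g n x) (f x).
rewrite (distrC (g k x) (f x)) (distrC (g n x) (g k x)).
move: fgk; move: n.+1%:R^-1 => r; lra.
Unshelve. all: by end_near.
Qed.

Lemma baire_strip_shrinks x e :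
  0 < e -> \forall n \near \oo, vsection (baire_strip n) x `<=` ball (f x) e.
Proof.
move=> e_gt0; have e4_gt0 : 0 < e / 4 by rewrite divr_gt0.
move/cvgrPdist_lt: (gf x) => /(_ _ e4_gt0)[N _ fgN].
near=> n => y [k /= nk]; rewrite -!ball_normE /= => gny.
have nN : (N <= n)%N by near: n; exact: nbhs_infty_ge.
have fgk := fgN k (leq_trans nN nk); have fgn := fgN n nN.
have : n.+1%:R^-1 < e / 4.
  by near: n; exact: near_infty_natSinv_lt (PosNum e4_gt0).
have := ler_distD (g n x) (f x) y; have := ler_distD (f x) (g k x) (g n x).
rewrite (distrC (g k x) (f x)); move: gny fgk fgn; move: n.+1%:R^-1 => r; lra.
Unshelve. all: by end_near.
Qed.

End baire_strip.

Lemma baire1_open_strips {R : realType} {X : topologicalType}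
    {Y : normedModType R} (f : X -> Y) :
  baire1 f ->
  exists G : nat -> set (X * Y),
    [/\ (forall n, open_strip (G n)), \bigcap_n G n = graph f &
        forall x, diam (vsection (G n) x) @[n --> \oo] --> 0%E].
Proof.
move=> [g [cg gf]]; exists (baire_strip g).
have fG n : graph f `<=` baire_strip g n := graph_sub_baire_strip g gf n.
have dG x : diam (vsection (baire_strip g n) x) @[n --> \oo] --> 0%E.
  exact: diam_cvg0 (fun n => fG n (x, f x) erefl) (baire_strip_shrinks g gf x).
split=> [n||//]; [exact: open_strip_baire_strip | exact: bigcap_eq_graph fG dG].
Qed.

Lemma open_strips_baire1 {R : realType} {X : topologicalType}
    {Y : normedModType R} (G : nat -> set (X * Y)) (f : X -> Y) :
  paracompact X -> (forall n, open_strip (G n)) ->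
  (forall n, graph f `<=` G n) ->
  (forall x, diam (vsection (G n) x) @[n --> \oo] --> 0%E) -> baire1 f.
Proof.
move=> pX sG fG dG.
have /choice[g gG] n :
    exists g : X -> Y, continuous g /\ forall x, G n (x, g x).
  exact: open_strip_continuous_selection pX (sG n) (fG n).
exists g; split => [n|x]; first exact: (gG n).1.
exact: cvg_diam0 (fun n => fG n (x, f x) erefl) (fun n => (gG n).2 x) (dG x).
Qed.

Theorem theorem1p3 (R : realType) (X : topologicalType)
  (Y : completeNormedModType R) (f : X -> Y) :
  paracompact X ->
  (baire1 f <->
   exists G : nat -> set (X * Y),
     [/\ (forall n, open_strip (G n)),
         \bigcap_n G n = graph f &
         forall x : X, (fun n => diam (vsection (G n) x)) @ \oo --> 0%E]).
Proof.
move=> pX; split; first exact: baire1_open_strips.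
move=> [G [sG capG dG]]; apply: open_strips_baire1 pX sG _ dG => n.
by rewrite -capG; exact: bigcap_inf.
Qed.
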